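(* Let $r>0$, $d>0$ with $d\sqrt{2}<r$, and let $X\subseteq\mathbb{R}^2$ be a bounded $r$-regular set whose boundary contains no point of $d\mathbb{Z}^2$. Consider a $3\times 3$ block of pixels of the lattice $d\mathbb{Z}^2$ whose middle pixel is grey. Then at least one of the 8 other pixels of the block is not grey.
   Context: A closed set $X\subseteq\mathbb{R}^2$ is $r$-regular if for each $x\in\partial X$ there are two open balls of radius $r$, $B_r(x_b)\subseteq X$ and $B_r(x_w)\subseteq \mathbb{R}^2\setminus X$, with $\overline{B_r(x_b)}\cap\overline{B_r(x_w)}=\{x\}$. Pixels are the closed squares $[dk,d(k+1)]\times[dl,d(l+1)]$, $k,l\in\mathbb{Z}$. A pixel $P$ is black if $\mathrm{area}(X\cap P)=d^2$, white if $\mathrm{area}(X\cap P)=0$, and grey otherwise. *)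

(* The plane R^2 is modelled as R * R (R : realType),
   with its product topology (= Euclidean topology) and area given by the
   product Lebesgue measure lebesgue_measure \x lebesgue_measure. *)
From HB Require Import structures.
From mathcomp Require Import all_boot all_order all_algebra.
From mathcomp Require Import all_classical all_reals all_analysis.
Set Implicit Arguments. Unset Strict Implicit. Unset Printing Implicit Defensive.
Import Order.TTheory GRing.Theory Num.Theory.
Import numFieldNormedType.Exports.
Local Open Scope classical_set_scope.
Local Open Scope ring_scope.

Definition dist2 {R : realType} (x y : R * R) : R :=
  (x.1 - y.1) ^+ 2 + (x.2 - y.2) ^+ 2.

Definition eball {R : realType} (c : R * R) (r : R) : set (R * R) :=
  [set y | dist2 y c < r ^+ 2].

Definition ecball {R : realType} (c : R * R) (r : R) : set (R * R) :=
  [set y | dist2 y c <= r ^+ 2].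

Definition bdry {R : realType} (X : set (R * R)) : set (R * R) :=
  closure X `\` interior X.

Definition bounded2 {R : realType} (X : set (R * R)) : Prop :=
  exists M : R, forall x, X x -> `|x.1| <= M /\ `|x.2| <= M.

Definition r_regular {R : realType} (r : R) (X : set (R * R)) : Prop :=
  closed X /\
  forall x, bdry X x ->
    exists xb xw : R * R,
      eball xb r `<=` X /\ eball xw r `<=` ~` X /\
      ecball xb r `&` ecball xw r = [set x].

Definition pixel {R : realType} (d : R) (k l : int) : set (R * R) :=
  [set p | d * k%:~R <= p.1 <= d * (k + 1)%:~R /\
           d * l%:~R <= p.2 <= d * (l + 1)%:~R].

Definition area {R : realType} (A : set (R * R)) : \bar R :=
  ((@lebesgue_measure R) \x (@lebesgue_measure R)) A.

Definition black {R : realType} (X : set (R * R)) (d : R) (k l : int) : Prop :=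
  area (X `&` pixel d k l) = (d ^+ 2)%:E.
Definition white {R : realType} (X : set (R * R)) (d : R) (k l : int) : Prop :=
  area (X `&` pixel d k l) = 0%E.
Definition grey {R : realType} (X : set (R * R)) (d : R) (k l : int) : Prop :=
  ~ black X d k l /\ ~ white X d k l.

(* A grey pixel meets both X and its complement, so the segment joining two
   such points crosses the boundary of X at a point x of the pixel.  The inner
   and outer r-balls at x touch only at x, so x is the midpoint of their
   centres.  Shrinking both balls towards x by the factor d sqrt 2 / r yields
   balls of radius d sqrt 2, still inside X and inside its complement, whose
   centres are symmetric about x at distance at most d sqrt 2; one of these
   centres lies in the 3x3 block, and the pixel containing it fits in the
   corresponding shrunken ball.  That pixel is black for the inner ball, and
   white for the outer one: a point of X on the bounding circle would be a
   pixel corner on the boundary of X, which is excluded. *)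

From HB Require Import structures.
From mathcomp Require Import all_boot all_order all_algebra.
From mathcomp Require Import all_classical all_reals all_analysis.
From mathcomp Require Import ring lra.
Import Order.TTheory GRing.Theory Num.Theory.
Import numFieldNormedType.Exports.
Local Open Scope classical_set_scope.
Local Open Scope ring_scope.
Set Implicit Arguments. Unset Strict Implicit. Unset Printing Implicit Defensive.

Section Plane.
Variable R : realType.
Implicit Types (a b c q x y : R * R) (d r t : R) (X : set (R * R)).

Definition homothety c t x : R * R :=
  (c.1 + t * (x.1 - c.1), c.2 + t * (x.2 - c.2)).

Lemma homothety0 c x : homothety c 0 x = c.
Proof. by rewrite /homothety !mul0r !addr0 -surjective_pairing. Qed.

Lemma homothety1 c x : homothety c 1 x = x.
Proof. by rewrite /homothety !mul1r !subrKC -surjective_pairing. Qed.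

Lemma continuous_homothety c x : continuous (homothety c ^~ x).
Proof.
move=> t; apply: (@cvg_pair _ _ _ _ (nbhs (c.1 + t * (x.1 - c.1)))
  (nbhs (c.2 + t * (x.2 - c.2)))) => /=;
  by apply: cvgD; [exact: cvg_cst | apply: cvgMr_tmp; exact: cvg_id].
Qed.

Lemma segment_meets_bdry X a b : X a -> ~ X b ->
  exists2 t, 0 <= t <= 1 & bdry X (homothety a t b).
Proof.
move=> Xa nXb; apply: contrapT => nobdry.
have clX_int t : 0 <= t <= 1 -> closure X (homothety a t b) ->
    interior X (homothety a t b).
  move=> t01 cl; apply: contrapT => nint.
  by apply: nobdry; exists t.
pose B := `[0, 1]%classic `&` homothety a ^~ b @^-1` interior X.
have B1 : B 1.
  suff -> : B = `[0, 1]%classic by rewrite /= in_itv /= lexx ler01.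
  apply: segment_connected.
  - exists 0; split; first by rewrite /= in_itv /= lexx ler01.
    apply: clX_int; first by rewrite lexx ler01.
    by rewrite homothety0; exact: subset_closure.
  - exists (homothety a ^~ b @^-1` interior X) => //.
    by apply: open_comp; [move=> t _; exact: continuous_homothety | exact: open_interior].
  - exists (homothety a ^~ b @^-1` closure X).
      by apply: preimage_closed; [move=> t _; exact: continuous_homothety | exact: closed_closure].
    apply/seteqP; split=> t [t01 ht]; split=> //.
      exact: subset_closure (interior_subset ht).
    by apply: clX_int => //; move: t01; rewrite /= in_itv.
by apply: nXb; case: B1 => _; rewrite /= homothety1 => /interior_subset.
Qed.

Definition midpoint x a b := a.1 + b.1 = 2 * x.1 /\ a.2 + b.2 = 2 * x.2.

Lemma midpoint_homothety x a b t :
  midpoint x a b -> midpoint x (homothety x t a) (homothety x t b).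
Proof.
have coord u v w : u + v = 2 * w -> w + t * (u - w) + (w + t * (v - w)) = 2 * w.
  move=> e; transitivity (2 * w + t * (u + v - 2 * w)); first ring.
  by rewrite e subrr mulr0 addr0.
by move=> [m1 m2]; split; apply: coord.
Qed.

Lemma dist2_ge0 x y : 0 <= dist2 x y.
Proof. by rewrite addr_ge0 ?sqr_ge0. Qed.

Lemma dist2_homothety x q y t :
  t * dist2 y q + (1 - t) * dist2 y x =
  dist2 y (homothety x t q) + t * (1 - t) * dist2 x q.
Proof. by rewrite /dist2 /=; ring. Qed.

Lemma dist2_homothety_center x q t :
  dist2 (homothety x t q) x = t ^+ 2 * dist2 x q.
Proof. by rewrite /dist2 /=; ring. Qed.

Lemma homothety_in_ecball x q t r :
  0 <= t -> ecball q r x -> ecball x (t * r) (homothety x t q).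
Proof.
rewrite /ecball /= dist2_homothety_center exprMn => t0 qx.
by rewrite ler_wpM2l ?sqr_ge0.
Qed.

Lemma dist2_homothety_le x q y t r : 0 < t <= 1 -> ecball q r x ->
  t * dist2 y q <= dist2 y (homothety x t q) + t * (1 - t) * r ^+ 2.
Proof.
move=> /andP[t0 t1] qx; have := dist2_homothety x q y t.
have : 0 <= (1 - t) * dist2 y x by rewrite mulr_ge0 ?subr_ge0 ?dist2_ge0.
have : t * (1 - t) * dist2 x q <= t * (1 - t) * r ^+ 2.
  by rewrite ler_wpM2l // mulr_ge0 ?subr_ge0 // ltW.
lra.
Qed.

Lemma ecball_homothety_sub x q t r : 0 < t <= 1 -> ecball q r x ->
  ecball (homothety x t q) (t * r) `<=` ecball q r.
Proof.
move=> t01 qx y; rewrite /ecball /= => yc.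
have := dist2_homothety_le y t01 qx; case/andP: t01 => t0 t1.
have -> : t * (1 - t) * r ^+ 2 = t * r ^+ 2 - (t * r) ^+ 2 by ring.
move=> le; rewrite -(ler_pM2l t0); lra.
Qed.

Lemma eball_homothety_sub x q t r : 0 < t <= 1 -> ecball q r x ->
  eball (homothety x t q) (t * r) `<=` eball q r.
Proof.
move=> t01 qx y; rewrite /eball /= => yc.
have := dist2_homothety_le y t01 qx; case/andP: t01 => t0 t1.
have -> : t * (1 - t) * r ^+ 2 = t * r ^+ 2 - (t * r) ^+ 2 by ring.
move=> le; rewrite -(ltr_pM2l t0); lra.
Qed.

Lemma ecball_touch_midpoint a b r x :
  ecball a r `&` ecball b r = [set x] -> midpoint x a b.
Proof.
move=> touch.
have [xa xb] : ecball a r x /\ ecball b r x.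
  by have : (ecball a r `&` ecball b r) x by rewrite touch.
pose m := ((a.1 + b.1) / 2, (a.2 + b.2) / 2).
have dist2_m c : c = a \/ c = b ->
    dist2 m c = (dist2 x a + dist2 x b) / 2 - dist2 x m.
  by case=> ->; rewrite /dist2 /m /=; field.
have : (ecball a r `&` ecball b r) m.
  have := dist2_ge0 x m; move: xa xb; rewrite /ecball /= !dist2_m; auto; lra.
by rewrite touch => /= <-; split; rewrite /m /=; field.
Qed.

Lemma ecball_closure q r : 0 < r -> ecball q r `<=` closure (eball q r).
Proof.
move=> r0 y yq B By.
have : nbhs 0 (homothety y ^~ q @^-1` B).
  by apply: continuous_homothety; rewrite homothety0.
move=> /nbhs_ballP[e /= e0 eB].
pose s := e / (e + 1).
have s0 : 0 < s by rewrite divr_gt0 // addr_gt0.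
have s1 : s < 1 by rewrite ltr_pdivrMr ?addr_gt0 //; lra.
have se : s < e by rewrite ltr_pdivrMr ?addr_gt0 //; nra.
exists (homothety y s q); split; last first.
  by apply: eB; rewrite -ball_normE /= sub0r normrN gtr0_norm.
rewrite /eball /=.
have -> : dist2 (homothety y s q) q = (1 - s) ^+ 2 * dist2 y q.
  by rewrite /dist2 /=; ring.
move: yq; rewrite /ecball /= => yq.
have r2 : 0 < r ^+ 2 by rewrite exprn_gt0.
have : (1 - s) ^+ 2 < 1 by rewrite expr2; nra.
have := dist2_ge0 y q; nra.
Qed.

Lemma ecball_sub_closed X q r : 0 < r -> closed X ->
  eball q r `<=` X -> ecball q r `<=` X.
Proof.
move=> r0 cX qX; rewrite [X in _ `<=` X](closure_id X).1 //.
exact: subset_trans (ecball_closure r0) (closureS qX).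
Qed.

Lemma outer_ecball_bdry X q r y : 0 < r -> eball q r `<=` ~` X ->
  X y -> ecball q r y -> bdry X y.
Proof.
move=> r0 qX Xy qy; split; first exact: subset_closure.
by move=> /(ecball_closure r0 qy)[z [qz Xz]]; exact: qX qz Xz.
Qed.

Lemma sqr_sub_le_itv (lo w u v : R) : lo <= u <= lo + w -> lo <= v <= lo + w ->
  (u - v) ^+ 2 <= w ^+ 2.
Proof. by move=> /andP[u1 u2] /andP[v1 v2]; rewrite !expr2; nra. Qed.

Lemma sqr_sub_eq_itv (lo w u v : R) : lo <= u <= lo + w -> lo <= v <= lo + w ->
  (u - v) ^+ 2 = w ^+ 2 -> u = lo \/ u = lo + w.
Proof.
move=> /andP[u1 u2] /andP[v1 v2] e.
have /eqP : (u - v - w) * (u - v + w) = 0.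
  by rewrite -[RHS](subrr (w ^+ 2)) -{1}e; ring.
by rewrite mulf_eq0 => /orP[/eqP|/eqP] h; [right|left]; lra.
Qed.

Lemma sqr_mul_sqrt2 d : (d * Num.sqrt 2) ^+ 2 = 2 * d ^+ 2.
Proof. by rewrite exprMn sqr_sqrtr // mulrC. Qed.

Lemma pixelE d (K L : int) p : pixel d K L p <->
  d * K%:~R <= p.1 <= d * K%:~R + d /\ d * L%:~R <= p.2 <= d * L%:~R + d.
Proof. by rewrite /pixel /= !intrD !mulrDr !mulr1. Qed.

Lemma pixel_homothety d K L a b t : 0 <= t <= 1 ->
  pixel d K L a -> pixel d K L b -> pixel d K L (homothety a t b).
Proof.
move=> /andP[t0 t1] /pixelE[/andP[a1 a2] /andP[a3 a4]].
move=> /pixelE[/andP[b1 b2] /andP[b3 b4]].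
by apply/pixelE => /=; split; apply/andP; split; nra.
Qed.

Lemma pixel_sub_ecball d K L c :
  pixel d K L c -> pixel d K L `<=` ecball c (d * Num.sqrt 2).
Proof.
move=> /pixelE[c1 c2] y /pixelE[y1 y2].
rewrite /ecball /= sqr_mul_sqrt2 /dist2.
have := sqr_sub_le_itv y1 c1; have := sqr_sub_le_itv y2 c2; lra.
Qed.

Lemma pixel_corner d K L c y : pixel d K L c -> pixel d K L y ->
  ~ eball c (d * Num.sqrt 2) y ->
  exists K' L' : int, y = (d * K'%:~R, d * L'%:~R).
Proof.
move=> /pixelE[c1 c2] /pixelE[y1 y2].
rewrite /eball /= sqr_mul_sqrt2 /dist2 => /negP; rewrite -leNgt => far.
have side (K0 : int) u v : d * K0%:~R <= u <= d * K0%:~R + d ->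
    d * K0%:~R <= v <= d * K0%:~R + d -> (u - v) ^+ 2 = d ^+ 2 ->
    exists K' : int, u = d * K'%:~R.
  move=> uK vK /(sqr_sub_eq_itv uK vK)[->|->]; first by exists K0.
  by exists (K0 + 1); rewrite intrD mulrDr mulr1.
have le1 := sqr_sub_le_itv y1 c1; have le2 := sqr_sub_le_itv y2 c2.
have [K' e1] := side _ _ _ y1 c1 (ltac:(lra)).
have [L' e2] := side _ _ _ y2 c2 (ltac:(lra)).
by exists K', L'; rewrite [y]surjective_pairing e1 e2.
Qed.

Lemma block_coord_small d (K : int) (x u : R) : 0 < d ->
  d * K%:~R <= x <= d * K%:~R + d -> u ^+ 2 <= d ^+ 2 ->
  d * K%:~R - d <= x + u <= d * K%:~R + 2 * d.
Proof.
move=> d0 /andP[x1 x2] u2.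
have [ud du] : u <= d /\ - d <= u by rewrite !expr2 in u2; split; nra.
by apply/andP; split; lra.
Qed.

Lemma block_coord_choice d (K : int) (x u : R) : 0 < d ->
  d * K%:~R <= x <= d * K%:~R + d -> u ^+ 2 <= 2 * d ^+ 2 ->
  d * K%:~R - d <= x + u <= d * K%:~R + 2 * d \/
  d * K%:~R - d <= x - u <= d * K%:~R + 2 * d.
Proof.
move=> d0 /andP[x1 x2] u2.
have [ud du] : u < 3 / 2 * d /\ - (3 / 2 * d) < u by rewrite !expr2 in u2; split; nra.
have [toward|away] := lerP ((x - (d * K%:~R + d / 2)) * u) 0.
  by left; apply/andP; split; nra.
by right; apply/andP; split; nra.
Qed.

Lemma block_coord_cell d (K : int) (c : R) : 0 < d ->
  d * K%:~R - d <= c <= d * K%:~R + 2 * d ->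
  exists2 i : int, -1 <= i <= 1 & d * (K + i)%:~R <= c <= d * (K + i)%:~R + d.
Proof.
move=> d0 /andP[c1 c2].
have [lo|gt] := lerP c (d * K%:~R).
  by exists (-1) => //; rewrite intrD mulrDr mulrN1; apply/andP; split; lra.
have [mid|hi] := lerP c (d * K%:~R + d).
  by exists 0 => //; rewrite addr0; apply/andP; split; lra.
by exists 1 => //; rewrite intrD mulrDr mulr1; apply/andP; split; lra.
Qed.

Lemma pixel_block_choice d (k l : int) x cb cw : 0 < d ->
  pixel d k l x -> midpoint x cb cw -> ecball x (d * Num.sqrt 2) cb ->
  exists i j : int, [/\ -1 <= i <= 1, -1 <= j <= 1 &
    pixel d (k + i) (l + j) cb \/ pixel d (k + i) (l + j) cw].
Proof.
move=> d0 /pixelE[x1 x2] [m1 m2]; rewrite /ecball sqr_mul_sqrt2 /dist2 /=.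
set u1 := cb.1 - x.1; set u2 := cb.2 - x.2 => near.
have [cb1 cb2] : cb.1 = x.1 + u1 /\ cb.2 = x.2 + u2 by rewrite !subrKC.
have [cw1 cw2] : cw.1 = x.1 - u1 /\ cw.2 = x.2 - u2 by split; lra.
have [c [hc c1 c2]] : exists c, [/\ c = cb \/ c = cw,
    d * k%:~R - d <= c.1 <= d * k%:~R + 2 * d &
    d * l%:~R - d <= c.2 <= d * l%:~R + 2 * d].
  (* One displacement coordinate is at most d; the sign of the other one can
     be chosen to point towards the centre of the pixel. *)
  have := sqr_ge0 u1; have := sqr_ge0 u2 => sq2 sq1.
  have [small1|big1] := lerP (u1 ^+ 2) (d ^+ 2).
    have [h|h] := block_coord_choice d0 x2 (ltac:(lra) : u2 ^+ 2 <= 2 * d ^+ 2).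
      by exists cb; split; [left | rewrite cb1 block_coord_small | rewrite cb2].
    by exists cw; split; [right | rewrite cw1 block_coord_small ?sqrrN | rewrite cw2].
  have small2 : u2 ^+ 2 <= d ^+ 2 by lra.
  have [h|h] := block_coord_choice d0 x1 (ltac:(lra) : u1 ^+ 2 <= 2 * d ^+ 2).
    by exists cb; split; [left | rewrite cb1 | rewrite cb2 block_coord_small].
  by exists cw; split; [right | rewrite cw1 | rewrite cw2 block_coord_small ?sqrrN].
have [i hi ci] := block_coord_cell d0 c1; have [j hj cj] := block_coord_cell d0 c2.
exists i, j; split => //.
by case: hc => <-; [left | right]; apply/pixelE; split.
Qed.

Lemma area_pixel d (K L : int) : 0 < d -> area (pixel d K L) = (d ^+ 2)%:E.
Proof.
move=> d0; have -> : pixel d K L =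
    `[d * K%:~R, d * (K + 1)%:~R] `*` `[d * L%:~R, d * (L + 1)%:~R].
  by apply/seteqP; split=> p /=; rewrite !in_itv.
have side (M : int) : lebesgue_measure `[d * M%:~R, d * (M + 1)%:~R] = d%:E.
  rewrite lebesgue_measure_itv /= lte_fin intrD mulrDr mulr1 ltrDl d0.
  by rewrite -EFinD addrAC subrr add0r.
rewrite /area product_measure1E // expr2 EFinM.
by congr (_ * _)%E; apply: side.
Qed.

Lemma black_of_subset X d K L : 0 < d -> pixel d K L `<=` X -> black X d K L.
Proof. by move=> d0 PX; rewrite /black setIidr // area_pixel. Qed.

Lemma white_of_disjoint X d K L : X `&` pixel d K L = set0 -> white X d K L.
Proof. by rewrite /white => ->; exact: measure0. Qed.

Lemma grey_meets_bdry X d K L : 0 < d -> grey X d K L ->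
  exists2 x, pixel d K L x & bdry X x.
Proof.
move=> d0 [nb nw].
have [a [Xa Pa]] : exists a, X a /\ pixel d K L a.
  apply: contrapT => none; apply/nw/white_of_disjoint/seteqP; split=> // y.
  by move=> [Xy Py]; apply: none; exists y.
have [b [Pb nXb]] : exists b, pixel d K L b /\ ~ X b.
  apply: contrapT => none; apply/nb/black_of_subset => // y Py.
  by apply: contrapT => nXy; apply: none; exists y.
have [t t01 bt] := segment_meets_bdry Xa nXb.
by exists (homothety a t b) => //; exact: pixel_homothety.
Qed.

Lemma white_of_outer_ball X q r d K L c : 0 < r -> 0 < d ->
  eball q r `<=` ~` X -> (forall k l : int, ~ bdry X (d * k%:~R, d * l%:~R)) ->
  pixel d K L c ->
  ecball c (d * Num.sqrt 2) `<=` ecball q r ->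
  eball c (d * Num.sqrt 2) `<=` eball q r -> white X d K L.
Proof.
move=> r0 d0 qX nolat Pc csub osub.
apply/white_of_disjoint/seteqP; split=> // y [Xy Py].
have [inner|] := pselect (eball c (d * Num.sqrt 2) y).
  exact: qX (osub _ inner) Xy.
move=> /(pixel_corner Pc Py)[K' [L' yE]]; apply: (nolat K' L'); rewrite -yE.
exact: outer_ecball_bdry qX Xy (csub _ (pixel_sub_ecball Pc Py)).
Qed.

End Plane.

Theorem lemma3p4 (R : realType) (r d : R) (X : set (R * R)) :
  0 < r -> 0 < d -> d * Num.sqrt 2 < r ->
  bounded2 X -> r_regular r X ->
  (forall k l : int, ~ bdry X (d * k%:~R, d * l%:~R)) ->
  forall k l : int, grey X d k l ->
  exists i j : int,
    [/\ -1 <= i <= 1, -1 <= j <= 1, (i, j) != (0, 0)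
      & ~ grey X d (k + i) (l + j)].
Proof.
move=> r0 d0 dr _ [cX reg] nolat k l grey_kl.
have [x Px bx] := grey_meets_bdry d0 grey_kl.
have [xb [xw [inX [outX touch]]]] := reg x bx.
have [xbx xwx] : ecball xb r x /\ ecball xw r x.
  by have : (ecball xb r `&` ecball xw r) x by rewrite touch.
pose t := d * Num.sqrt 2 / r.
have tr : t * r = d * Num.sqrt 2 by rewrite /t divfK ?gt_eqF.
have t0 : 0 < t by rewrite divr_gt0 ?mulr_gt0 ?sqrtr_gt0.
have t01 : 0 < t <= 1 by rewrite t0 ler_pdivrMr // mul1r ltW.
have near_b : ecball x (d * Num.sqrt 2) (homothety x t xb).
  by rewrite -tr; apply: homothety_in_ecball xbx; exact: ltW.
have [i [j [hi hj Pij]]] := pixel_block_choice d0 Px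
  (midpoint_homothety t (ecball_touch_midpoint touch)) near_b.
have ng : ~ grey X d (k + i) (l + j).
  case: Pij => Pc [nb nw].
    apply/nb/black_of_subset/(subset_trans (pixel_sub_ecball Pc)) => //.
    rewrite -tr; apply: subset_trans (ecball_homothety_sub t01 xbx) _.
    exact: ecball_sub_closed.
  apply/nw/(white_of_outer_ball r0 d0 outX nolat Pc); rewrite -tr.
    exact: ecball_homothety_sub.
  exact: eball_homothety_sub.
exists i, j; split => //.
by apply/eqP => -[i0 j0]; apply: ng; rewrite i0 j0 !addr0.
Qed.
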